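(* Under complete randomization, suppose Assumption 1 holds and Assumptions 2 and 3 hold with order $k<T$. Let $\vec z'\in\{A,B\}^T$ and $t\in\{1,\dots,T\}$. Then $\bar Y_t(\vec z')$ is unbiasedly estimable if either (a) the hypothesis of Proposition S2 holds, i.e. ($t\le k$ and some $\vec z\in\mathcal{S}^{\mathrm{obs}}$ has $\vec z_{[1,t]}=\vec z'_{[1,t]}$) or ($t>k$ and some $\vec z\in\mathcal{S}^{\mathrm{obs}}$ has $\vec z_{[t-k+1,t]}=\vec z'_{[t-k+1,t]}$); or (b) $t\ge k$ and there exist $t'\ge k$, $t'\neq t$, and sequences $\vec z_1,\vec z_2,\vec z_3\in\{A,B\}^T$ with $\vec z_{1,[t'-k+1,t']}=\vec z'_{[t-k+1,t]}$ and $\vec z_{2,[t-k+1,t]}=\vec z_{3,[t'-k+1,t']}$, such that each of $\bar Y_{t'}(\vec z_1)$, $\bar Y_t(\vec z_2)$, $\bar Y_{t'}(\vec z_3)$ is unbiasedly estimable.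
   Context: Setup: $N$ units, treatments $A,B$, $T$ periods; sequences $\vec z\in\{A,B\}^T$, $\vec z_{[t_1,t_2]}=z_{t_1}\cdots z_{t_2}$. $\mathcal{S}^{\mathrm{obs}}$ implemented sequences; complete randomization with fixed positive group sizes $N_{\vec z}$; fixed potential outcomes $Y_{it}(\vec z)$; observed $Y_{it}=Y_{it}(\vec Z_i)$; randomness only from assignment. $\bar Y_t(\vec z)=N^{-1}\sum_iY_{it}(\vec z)$, $\widehat Y_t(\vec z)=N_{\vec z}^{-1}\sum_iY_{it}\mathbf1(\vec Z_i=\vec z)$. Assumption 1: $Y_{it}(\vec z)=Y_{it}(\vec z')$ whenever $\vec z_{[1,t]}=\vec z'_{[1,t]}$. Assumption 2 (order $k$): $Y_{it}(\vec z)=Y_{it}(\vec z')$ whenever $\vec z_{[\max(1,t-k+1),t]}=\vec z'_{[\max(1,t-k+1),t]}$; for $t\ge k$ write $Y_{it}(a)$, $a\in\{A,B\}^k$, for the common value over sequences with $\vec z_{[t-k+1,t]}=a$. Assumption 3 (order $k$): for all $a,b\in\{A,B\}^k$ and $t'>t\ge k$, $Y_{it}(a)-Y_{it}(b)=Y_{it'}(a)-Y_{it'}(b)$. A quantity is unbiasedly estimable if there is an estimator $\sum_{s}\sum_{\vec z\in\mathcal{S}^{\mathrm{obs}}}\tilde w_s(\vec z)\widehat Y_s(\vec z)$ with non-random weights whose expectation equals it for every finite population satisfying the assumptions. *)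

From HB Require Import structures.
From mathcomp Require Import all_boot all_order all_algebra.
Set Implicit Arguments. Unset Strict Implicit. Unset Printing Implicit Defensive.
Import Order.TTheory GRing.Theory Num.Theory.
Local Open Scope ring_scope.

(* Treatments: A is encoded as [true], B as [false].
   A treatment sequence is a T.-tuple bool; periods are numbered 1..T. *)

Definition zat (T : nat) (z : T.-tuple bool) (s : nat) : bool := nth false z s.-1.

Definition segeq (T : nat) (z z' : T.-tuple bool) (t1 t2 : nat) : Prop :=
  forall s : nat, (t1 <= s)%N -> (s <= t2)%N -> zat z s = zat z' s.

(* the window z_[t-k+1, t] as an element of {A,B}^k (meaningful for t >= k) *)
Definition win (T : nat) (k : nat) (z : T.-tuple bool) (t : nat) : k.-tuple bool :=
  [tuple zat z (t - k + 1 + j)%N | j < k].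

(* potential outcomes Y i t z *)
Definition pop (R : Type) (N T : nat) := 'I_N -> nat -> T.-tuple bool -> R.

Definition assumption1 (R : Type) (N T : nat) (Y : pop R N T) : Prop :=
  forall (i : 'I_N) (t : nat) (z z' : T.-tuple bool),
    (1 <= t <= T)%N -> segeq z z' 1 t -> Y i t z = Y i t z'.

Definition assumption2 (R : Type) (N T k : nat) (Y : pop R N T) : Prop :=
  forall (i : 'I_N) (t : nat) (z z' : T.-tuple bool),
    (1 <= t <= T)%N -> segeq z z' (maxn 1 (t - k + 1)) t -> Y i t z = Y i t z'.

(* Y_it(a) - Y_it(b) = Y_it'(a) - Y_it'(b), where Y_it(a) is the common value of
   Y i t z over sequences z whose window ending at t equals a *)
Definition assumption3 (R : zmodType) (N T k : nat) (Y : pop R N T) : Prop :=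
  forall (i : 'I_N) (a b : k.-tuple bool) (t t' : nat)
         (za zb za' zb' : T.-tuple bool),
    (k <= t)%N -> (1 <= t)%N -> (t < t')%N -> (t' <= T)%N ->
    win k za t = a -> win k zb t = b -> win k za' t' = a -> win k zb' t' = b ->
    Y i t za - Y i t zb = Y i t' za' - Y i t' zb'.

Definition assumptions (R : zmodType) (N T k : nat) (Y : pop R N T) : Prop :=
  [/\ assumption1 Y, assumption2 k Y & assumption3 k Y].

Definition Ybar (R : fieldType) (N T : nat) (Y : pop R N T) (t : nat)
  (z : T.-tuple bool) : R :=
  (N%:R)^-1 * \sum_(i < N) Y i t z.

(* assignments Z : units -> sequences; complete randomization: uniform over the
   assignments with exactly n z units on each z in Sobs and none elsewhere *)
Definition valid_assign (N T : nat) (Sobs : {set T.-tuple bool})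
  (n : T.-tuple bool -> nat) (Z : {ffun 'I_N -> T.-tuple bool}) : bool :=
  [forall z : T.-tuple bool,
     #|[set i : 'I_N | Z i == z]| == (if z \in Sobs then n z else 0%N)].

Definition Expect (R : fieldType) (N T : nat) (Sobs : {set T.-tuple bool})
  (n : T.-tuple bool -> nat) (f : {ffun 'I_N -> T.-tuple bool} -> R) : R :=
  (#|[set Z : {ffun 'I_N -> T.-tuple bool} | valid_assign Sobs n Z]|%:R)^-1 *
  \sum_(Z : {ffun 'I_N -> T.-tuple bool} | valid_assign Sobs n Z) f Z.

Definition Yhat (R : fieldType) (N T : nat) (n : T.-tuple bool -> nat)
  (Y : pop R N T) (Z : {ffun 'I_N -> T.-tuple bool}) (s : nat)
  (z : T.-tuple bool) : R :=
  ((n z)%:R)^-1 * \sum_(i < N) Y i s (Z i) * (Z i == z)%:R.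

Definition estimator (R : fieldType) (N T : nat) (Sobs : {set T.-tuple bool})
  (n : T.-tuple bool -> nat) (w : nat -> T.-tuple bool -> R) (Y : pop R N T)
  (Z : {ffun 'I_N -> T.-tuple bool}) : R :=
  \sum_(1 <= s < T.+1) \sum_(z in Sobs) w s z * Yhat n Y Z s z.

Definition unbiasedly_estimable (R : fieldType) (N T k : nat)
  (Sobs : {set T.-tuple bool}) (n : T.-tuple bool -> nat)
  (theta : pop R N T -> R) : Prop :=
  exists w : nat -> T.-tuple bool -> R,
    forall Y : pop R N T, assumptions k Y ->
      Expect Sobs n (estimator Sobs n w Y) = theta Y.

(* Under complete randomization the units are exchangeable, so each unit
   receives an observed sequence z in exactly a fraction n z / N of the
   admissible assignments; hence \hat Y_t(z) is unbiased for \bar Y_t(z)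
   whenever z is observed.  Unbiased estimability is preserved by sums and
   differences, since the estimator is linear in the weights.  Case (a) follows
   because Assumptions 1 and 2 make \bar Y_t(z') equal to \bar Y_t(z) for an
   observed z; in case (b), Assumption 3 says the contrast between two windows
   does not depend on the period, which gives
   \bar Y_t(z') = \bar Y_t'(z1) + \bar Y_t(z2) - \bar Y_t'(z3). *)

From HB Require Import structures.
From mathcomp Require Import all_boot all_order all_algebra.
From mathcomp Require Import fingroup perm.
From mathcomp Require Import ring.
Import Order.TTheory GRing.Theory Num.Theory.
Set Implicit Arguments. Unset Strict Implicit. Unset Printing Implicit Defensive.
Local Open Scope ring_scope.

Local Notation assignment N T := {ffun 'I_N -> T.-tuple bool}.

Section CompleteRandomization.
Variables (N T : nat) (Sobs : {set T.-tuple bool}) (n : T.-tuple bool -> nat).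
Hypothesis n_sum : (\sum_(z in Sobs) n z)%N = N.

Lemma valid_assign_exists : exists Z : assignment N T, valid_assign Sobs n Z.
Proof.
(* List every observed z exactly n z times and give unit i the i-th entry. *)
pose x0 : T.-tuple bool := [tuple false | _ < T].
pose s := flatten [seq nseq (n y) y | y <- enum Sobs].
have size_s : size s = N.
  rewrite size_flatten /shape -map_comp (eq_map (g := n)) => [|y /=]; last first.
    by rewrite size_nseq.
  by rewrite -n_sum -big_enum /= sumnE big_map.
exists [ffun i : 'I_N => nth x0 s i]; apply/forallP => z; apply/eqP.
have -> : [set x | [ffun i : 'I_N => nth x0 s i] x == z] = [set i : 'I_N | nth x0 s i == z].
  by apply/setP => i; rewrite !inE ffunE.
transitivity (count_mem z [seq nth x0 s i | i : 'I_N <- enum 'I_N]).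
  rewrite count_map cardsE cardE -size_filter {1}/enum_mem enumT.
  by congr size; apply: eq_filter.
have -> : [seq nth x0 s i | i : 'I_N <- enum 'I_N] = s.
  by rewrite -{2}(mkseq_nth x0 s) size_s /mkseq -val_enum_ord -map_comp.
rewrite count_flatten -map_comp sumnE big_map big_enum /=.
under eq_bigr => y _ do rewrite count_nseq /=.
case: ifP => zS; last by rewrite big1 // => y yS; case: eqP yS => [->|]; rewrite ?zS.
by rewrite (bigD1 z) //= eqxx mul1n big1 ?addn0 // => y /andP [_ /negbTE ->].
Qed.

Definition nassign_at (z : T.-tuple bool) (i : 'I_N) : nat :=
  #|[set Z : assignment N T | valid_assign Sobs n Z & Z i == z]|.

Lemma valid_assign_perm (s : {perm 'I_N}) (Z : assignment N T) :
  valid_assign Sobs n [ffun x => Z (s x)] = valid_assign Sobs n Z.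
Proof.
apply: eq_forallb => z.
suff -> : [set x | [ffun x => Z (s x)] x == z] = s @^-1: [set x | Z x == z].
  by rewrite card_preimset //; exact: perm_inj.
by apply/setP => x; rewrite !inE ffunE.
Qed.

(* Relabelling units by a transposition permutes the admissible assignments. *)
Lemma nassign_at_unit_free z (i j : 'I_N) : nassign_at z i = nassign_at z j.
Proof.
pose f (Z : assignment N T) := [ffun x => Z (tperm i j x)].
have f_inj : injective f.
  by move=> Z1 Z2 /ffunP eqZ; apply/ffunP => x; have := eqZ (tperm i j x); rewrite !ffunE tpermK.
rewrite /nassign_at -(card_preimset _ f_inj); apply: eq_card => Z.
by rewrite !inE valid_assign_perm ffunE tpermL.
Qed.

Lemma sum_nassign_at z : z \in Sobs ->
  (\sum_(i < N) nassign_at z i = #|[set Z : assignment N T | valid_assign Sobs n Z]| * n z)%N.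
Proof.
move=> zS; rewrite /nassign_at.
under eq_bigr => i _ do rewrite -sum1dep_card big_mkcondr /=.
rewrite exchange_big /= -sum_nat_const; apply: eq_big => [Z | Z]; first by rewrite inE.
move=> /forallP /(_ z) /eqP; rewrite zS => <-.
by rewrite -big_mkcond /= sum1dep_card.
Qed.

End CompleteRandomization.

Section Estimators.
Variables (R : fieldType) (N T : nat) (Sobs : {set T.-tuple bool})
  (n : T.-tuple bool -> nat).
Implicit Types (f g : assignment N T -> R) (w : nat -> T.-tuple bool -> R).

Lemma eq_Expect f g : f =1 g -> Expect Sobs n f = Expect Sobs n g.
Proof. by move=> fg; rewrite /Expect; congr (_ * _); apply: eq_bigr. Qed.

Lemma ExpectD f g :
  Expect Sobs n (fun Z => f Z + g Z) = Expect Sobs n f + Expect Sobs n g.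
Proof. by rewrite /Expect big_split mulrDr. Qed.

Lemma ExpectB f g :
  Expect Sobs n (fun Z => f Z - g Z) = Expect Sobs n f - Expect Sobs n g.
Proof. by rewrite /Expect sumrB mulrBr. Qed.

Lemma estimatorD w1 w2 (Y : pop R N T) Z :
  estimator Sobs n (fun s x => w1 s x + w2 s x) Y Z
  = estimator Sobs n w1 Y Z + estimator Sobs n w2 Y Z.
Proof.
rewrite /estimator -big_split; apply: eq_bigr => s _.
by rewrite -big_split; apply: eq_bigr => x _; rewrite mulrDl.
Qed.

Lemma estimatorB w1 w2 (Y : pop R N T) Z :
  estimator Sobs n (fun s x => w1 s x - w2 s x) Y Z
  = estimator Sobs n w1 Y Z - estimator Sobs n w2 Y Z.
Proof.
rewrite /estimator -sumrB; apply: eq_bigr => s _.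
by rewrite -sumrB; apply: eq_bigr => x _; rewrite mulrBl.
Qed.

Lemma estimator_delta (Y : pop R N T) Z t z : (1 <= t <= T)%N -> z \in Sobs ->
  estimator Sobs n (fun s x => ((s == t) && (x == z))%:R) Y Z = Yhat n Y Z t z.
Proof.
move=> ht zS; rewrite /estimator.
transitivity (\sum_(1 <= s < T.+1) if s == t then Yhat n Y Z s z else 0).
  apply: eq_bigr => s _; case: (s == t); last by rewrite big1 // => x _; rewrite mul0r.
  by rewrite (bigD1 z) //= eqxx mul1r big1 ?addr0 // => x /andP [_ /negbTE ->]; rewrite mul0r.
by rewrite -big_mkcond big_nat1_eq ltnS ht.
Qed.

Variable k : nat.

Lemma eq_unbiasedly_estimable (theta1 theta2 : pop R N T -> R) :
  (forall Y, assumptions k Y -> theta1 Y = theta2 Y) ->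
  unbiasedly_estimable k Sobs n theta1 -> unbiasedly_estimable k Sobs n theta2.
Proof. by move=> eq12 [w Ew]; exists w => Y HY; rewrite Ew // eq12. Qed.

Lemma unbiasedly_estimableD (theta1 theta2 : pop R N T -> R) :
  unbiasedly_estimable k Sobs n theta1 -> unbiasedly_estimable k Sobs n theta2 ->
  unbiasedly_estimable k Sobs n (fun Y => theta1 Y + theta2 Y).
Proof.
move=> [w1 E1] [w2 E2]; exists (fun s x => w1 s x + w2 s x) => Y HY.
by rewrite (eq_Expect (estimatorD w1 w2 Y)) ExpectD E1 ?E2.
Qed.

Lemma unbiasedly_estimableB (theta1 theta2 : pop R N T -> R) :
  unbiasedly_estimable k Sobs n theta1 -> unbiasedly_estimable k Sobs n theta2 ->
  unbiasedly_estimable k Sobs n (fun Y => theta1 Y - theta2 Y).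
Proof.
move=> [w1 E1] [w2 E2]; exists (fun s x => w1 s x - w2 s x) => Y HY.
by rewrite (eq_Expect (estimatorB w1 w2 Y)) ExpectB E1 ?E2.
Qed.

End Estimators.

Section Unbiasedness.
Variables (R : numFieldType) (N T : nat) (Sobs : {set T.-tuple bool})
  (n : T.-tuple bool -> nat).
Hypotheses (n_pos : forall z, z \in Sobs -> (0 < n z)%N)
  (n_sum : (\sum_(z in Sobs) n z)%N = N).

Lemma Expect_Yhat (Y : pop R N T) s z : z \in Sobs ->
  Expect Sobs n (fun Z => Yhat n Y Z s z) = Ybar Y s z.
Proof.
move=> zS; have nz_gt0 := n_pos zS.
set V := #|[set Z : assignment N T | valid_assign Sobs n Z]|.
have V_gt0 : (0 < V)%N.
  by have [Z VZ] := valid_assign_exists n_sum; apply/card_gt0P; exists Z; rewrite inE.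
have N_gt0 : (0 < N)%N by rewrite -n_sum (bigD1 z) //= ltn_addr.
have nassign_atE (i : 'I_N) : (nassign_at Sobs n z i)%:R = V%:R * (n z)%:R / N%:R :> R.
  have := sum_nassign_at N n zS.
  rewrite (eq_bigr (fun=> nassign_at Sobs n z i)) => [|j _]; last exact: nassign_at_unit_free.
  rewrite sum_nat_const card_ord => /(congr1 (fun m => m%:R : R)); rewrite !natrM => <-.
  by rewrite mulrAC divff ?mul1r // pnatr_eq0 -lt0n.
have Yhat_numerator_at (i : 'I_N) :
    \sum_(Z | valid_assign Sobs n Z) Y i s (Z i) * (Z i == z)%:R
    = Y i s z * (nassign_at Sobs n z i)%:R.
  rewrite /nassign_at -sum1dep_card natr_sum mulr_sumr big_mkcondr /=.
  by apply: eq_bigr => Z _; case: eqP => [->|]; rewrite ?mulr0.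
rewrite /Expect /Yhat /Ybar -mulr_sumr exchange_big /=.
under eq_bigr => i _ do rewrite Yhat_numerator_at nassign_atE.
rewrite -mulr_suml -/V; field.
by rewrite !pnatr_eq0 -!lt0n V_gt0 nz_gt0 N_gt0.
Qed.

Lemma unbiasedly_estimable_Ybar_obs k t z : (1 <= t <= T)%N -> z \in Sobs ->
  unbiasedly_estimable k Sobs n (fun Y : pop R N T => Ybar Y t z).
Proof.
move=> ht zS; exists (fun s x => ((s == t) && (x == z))%:R) => Y _.
by rewrite (eq_Expect _ _ (fun Z => estimator_delta n Y Z ht zS)) Expect_Yhat.
Qed.

End Unbiasedness.

Section Identification.
Variables (R : fieldType) (N T k : nat) (Y : pop R N T).

Lemma eq_Ybar t z z' : (forall i, Y i t z = Y i t z') -> Ybar Y t z = Ybar Y t z'.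
Proof. by move=> eqY; rewrite /Ybar; congr (_ * _); apply: eq_bigr. Qed.

Lemma Ybar_prefix t z z' : assumption1 Y -> (1 <= t <= T)%N ->
  segeq z z' 1 t -> Ybar Y t z = Ybar Y t z'.
Proof. by move=> A1 ht zz'; apply: eq_Ybar => i; apply: A1. Qed.

Lemma Ybar_window t z z' : assumption2 k Y -> (1 <= t <= T)%N ->
  segeq z z' (t - k + 1) t -> Ybar Y t z = Ybar Y t z'.
Proof.
move=> A2 ht zz'; apply: eq_Ybar => i; apply: A2 => //.
by rewrite (maxn_idPr _) // addn1.
Qed.

Lemma outcome_window_shift i t t' z' z1 z2 z3 :
  assumption3 k Y -> (0 < k)%N -> (k <= t <= T)%N -> (k <= t' <= T)%N -> t != t' ->
  win k z1 t' = win k z' t -> win k z2 t = win k z3 t' ->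
  Y i t z' = Y i t' z1 + Y i t z2 - Y i t' z3.
Proof.
move=> A3 k_gt0 /andP [kt tT] /andP [kt' t'T] tt' e1 e2.
case: ltngtP tt' => // [lt_tt' | lt_t't] _.
- have := A3 i _ _ t t' z' z2 z1 z3 kt (leq_trans k_gt0 kt) lt_tt' t'T erefl erefl e1 (esym e2).
  by move=> contrast; rewrite addrAC -contrast subrK.
- have := A3 i _ _ t' t z1 z3 z' z2 kt' (leq_trans k_gt0 kt') lt_t't tT erefl erefl (esym e1) e2.
  by move=> contrast; rewrite addrAC contrast subrK.
Qed.

Lemma Ybar_window_shift t t' z' z1 z2 z3 :
  assumption3 k Y -> (0 < k)%N -> (k <= t <= T)%N -> (k <= t' <= T)%N -> t != t' ->
  win k z1 t' = win k z' t -> win k z2 t = win k z3 t' ->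
  Ybar Y t z' = Ybar Y t' z1 + Ybar Y t z2 - Ybar Y t' z3.
Proof.
move=> A3 k_gt0 ht ht' tt' e1 e2; rewrite /Ybar -mulrDr -mulrBr -big_split -sumrB.
by congr (_ * _); apply: eq_bigr => i _; apply: outcome_window_shift.
Qed.

End Identification.

Theorem propositionS3 (R : realFieldType) (N T k : nat)
  (Sobs : {set T.-tuple bool}) (n : T.-tuple bool -> nat)
  (n_pos : forall z, z \in Sobs -> (0 < n z)%N)
  (n_sum : (\sum_(z in Sobs) n z)%N = N)
  (k_pos : (0 < k)%N) (k_lt_T : (k < T)%N)
  (z' : T.-tuple bool) (t : nat) (ht : (1 <= t <= T)%N) :
  ( (* (a): hypothesis of Proposition S2 *)
    ((t <= k)%N /\ exists2 z, z \in Sobs & segeq z z' 1 t) \/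
    ((k < t)%N /\ exists2 z, z \in Sobs & segeq z z' (t - k + 1) t) \/
    (* (b) *)
    ((k <= t)%N /\
     exists t' : nat, [/\ (k <= t')%N, (t' <= T)%N & t' <> t] /\
     exists z1 z2 z3 : T.-tuple bool,
       [/\ win k z1 t' = win k z' t, win k z2 t = win k z3 t',
           unbiasedly_estimable k Sobs n (fun Y : pop R N T => Ybar Y t' z1),
           unbiasedly_estimable k Sobs n (fun Y : pop R N T => Ybar Y t z2) &
           unbiasedly_estimable k Sobs n (fun Y : pop R N T => Ybar Y t' z3)]) ) ->
  unbiasedly_estimable k Sobs n (fun Y : pop R N T => Ybar Y t z').
Proof.
case=> [[_ [z zS zz']] | [[_ [z zS zz']] | [kt [t' [[kt' t'T t't]]]]]].
- apply: eq_unbiasedly_estimable (unbiasedly_estimable_Ybar_obs R n_pos n_sum k ht zS).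
  by move=> Y [A1 _ _]; apply: Ybar_prefix.
- apply: eq_unbiasedly_estimable (unbiasedly_estimable_Ybar_obs R n_pos n_sum k ht zS).
  by move=> Y [_ A2 _]; apply: Ybar_window A2 ht zz'.
- move=> [z1 [z2 [z3 [e1 e2 est1 est2 est3]]]].
  apply: eq_unbiasedly_estimable (unbiasedly_estimableB (unbiasedly_estimableD est1 est2) est3).
  move=> Y [_ _ A3]; apply/esym/(Ybar_window_shift A3) => //.
  - by rewrite kt; case/andP: ht.
  - by rewrite kt'.
  - by apply/eqP => tt'; apply: t't.
Qed.
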